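(* Let $\delta,\varepsilon,\gamma\in\mathbb{R}$ with $\varepsilon\neq 0$, let $\{\alpha_j\}_{j\ge1}$, $\{\beta_j\}_{j\ge1}$ be bounded real sequences with all terms nonzero, and let $\{\lambda_j\}_{j\ge1}$ be a real sequence with $\lambda_j\to\infty$. Consider real sequences $\mathbf c=(c_1,c_2,\dots)$ satisfying $$(\delta-\lambda_1-\gamma\varepsilon)c_1+\alpha_1\varepsilon c_2=0,\qquad \beta_{j-1}\varepsilon c_{j-1}+(\delta-\lambda_j)c_j+\alpha_j\varepsilon c_{j+1}=0\quad (j\ge 2).$$ Then: (a) the set of such sequences is a one-dimensional real vector space, i.e. a solution is unique up to multiplication by a constant (and is determined by $c_1$); (b) if $\mathbf c$ is a nontrivial solution and $\mathbf c\in\ell^2$, then $\dfrac{c_j}{c_{j-1}}\sim\dfrac{\beta_{j-1}\varepsilon}{\lambda_j-\delta}$; if $\mathbf c$ is a nontrivial solution and $\mathbf c\notin\ell^2$, then $\dfrac{c_j}{c_{j-1}}\sim\dfrac{\lambda_{j-1}-\delta}{\alpha_{j-1}\varepsilon}$.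
   Context: $\ell^2$ denotes the space of real sequences $(x_1,x_2,\dots)$ with $\sum_j|x_j|^2<\infty$. The notation $a_j\sim b_j$ means $a_j/b_j\to1$ as $j\to\infty$. The system above is equivalent to the infinite matrix equation $T\mathbf c=0$ where $T$ is tridiagonal with diagonal $(\delta-\lambda_1-\gamma\varepsilon,\delta-\lambda_2,\delta-\lambda_3,\dots)$, superdiagonal $(\alpha_1\varepsilon,\alpha_2\varepsilon,\dots)$ and subdiagonal $(\beta_1\varepsilon,\beta_2\varepsilon,\dots)$. *)

From Stdlib Require Import Reals.
Open Scope R_scope.

(* Sequences are 0-indexed: c n stands for the paper's c_{n+1}
   (likewise alpha, beta, lambda). *)

Definition is_solution (delta eps gamma : R) (alpha beta lambda : nat -> R)
  (c : nat -> R) : Prop :=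
  (delta - lambda 0%nat - gamma * eps) * c 0%nat + alpha 0%nat * eps * c 1%nat = 0 /\
  (forall n : nat,
     beta n * eps * c n + (delta - lambda (S n)) * c (S n)
       + alpha (S n) * eps * c (S (S n)) = 0).

Definition in_l2 (c : nat -> R) : Prop :=
  exists l : R, Un_cv (fun n => sum_f_R0 (fun j => (c j) ^ 2) n) l.

Definition bounded_seq (u : nat -> R) : Prop :=
  exists M : R, forall n : nat, Rabs (u n) <= M.

Definition asymp_equiv (a b : nat -> R) : Prop :=
  Un_cv (fun n => a n / b n) 1.

From Stdlib Require Import Reals Lra Lia Psatz Classical.
Open Scope R_scope.

(* (a) Row j of T c = 0 expresses c_{j+1} through c_j and c_{j-1}, with the
   nonzero coefficient alpha_j eps.  Hence a solution is determined by c_1,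
   solutions form a vector space, and the solution obtained from c_1 = 1
   spans it.

   (b) Shifting indices, a solution satisfies the three-term recurrence
     a_n c_{n+2} = L_n c_{n+1} - b_n c_n
   with bounded nonzero off-diagonal coefficients a, b and a diagonal L
   tending to +oo.  Once L_n > 2(A+B) (A, B bounds for |a|, |b|), a nontrivial
   solution is eventually either "dominant" (|c_n| increases, so c is not in
   l^2 and c_{n+2}/c_{n+1} ~ L_n/a_n) or "recessive" (|c_n| at least halves at
   each step, so c is in l^2 and c_{n+1}/c_n ~ b_n/L_n). *)

Lemma Rabs_div_le (X Y Z : R) : Y <> 0 -> Rabs X <= Z * Rabs Y -> Rabs (X / Y) <= Z.
Proof.
  intros HY H. unfold Rdiv. rewrite Rabs_mult, Rabs_inv.
  assert (0 < Rabs Y) by (apply Rabs_pos_lt; auto).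
  apply Rmult_le_reg_r with (Rabs Y); auto.
  rewrite Rmult_assoc, Rinv_l; lra.
Qed.

Lemma growth_step (a b L A B x y z : R) :
  Rabs a <= A -> Rabs b <= B -> A + B < L -> Rabs z <= Rabs y -> y <> 0 ->
  a * x = L * y - b * z -> Rabs y < Rabs x.
Proof.
  intros Ha Hb HL Hzy Hy Hrec.
  assert (Hy0 : 0 < Rabs y) by (apply Rabs_pos_lt; auto).
  pose proof (Rabs_pos a). pose proof (Rabs_pos b).
  assert (Hlow : L * Rabs y - Rabs b * Rabs z <= Rabs a * Rabs x).
  { rewrite <- !Rabs_mult, Hrec.
    pose proof (Rabs_triang_inv (L * y) (b * z)) as T.
    rewrite Rabs_mult, (Rabs_right L) in T by lra. exact T. }
  assert (Rabs b * Rabs z <= B * Rabs y) by (apply Rmult_le_compat; auto using Rabs_pos).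
  assert (Hgap : Rabs a * Rabs y < Rabs a * Rabs x) by nra.
  destruct (Rle_lt_dec (Rabs x) (Rabs y)) as [Hxy|]; auto.
  pose proof (Rmult_le_compat_l (Rabs a) _ _ (Rabs_pos a) Hxy). lra.
Qed.

Lemma halving_step (a b L A B x y z : R) :
  Rabs a <= A -> Rabs b <= B -> 0 < L -> 2 * (A + B) <= L ->
  Rabs x <= Rabs y -> Rabs y <= Rabs z ->
  a * x = L * y - b * z -> Rabs y <= Rabs z / 2.
Proof.
  intros Ha Hb HL HAB Hxy Hyz Hrec.
  assert (Hup : L * Rabs y <= Rabs a * Rabs x + Rabs b * Rabs z).
  { rewrite <- (Rabs_right L), <- !Rabs_mult by lra.
    replace (L * y) with (a * x + b * z) by lra. apply Rabs_triang. }
  assert (Rabs a * Rabs x <= A * Rabs z)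
    by (apply Rmult_le_compat; auto using Rabs_pos; lra).
  assert (Rabs b * Rabs z <= B * Rabs z)
    by (apply Rmult_le_compat_r; auto using Rabs_pos).
  nra.
Qed.

(* Relative error of the dominant ratio x/y ~ L/a: it is (b z)/(y L) up to
   sign, hence at most B/L when |z| <= |y|. *)
Lemma dominant_ratio_error (a b L B x y z : R) :
  a <> 0 -> y <> 0 -> 0 < L -> Rabs b <= B -> Rabs z <= Rabs y ->
  a * x = L * y - b * z -> Rabs ((x / y) / (L / a) - 1) <= B / L.
Proof.
  intros Ha Hy HL Hb Hzy Hrec.
  assert (Hx : x = (L * y - b * z) / a) by (rewrite <- Hrec; field; auto).
  replace ((x / y) / (L / a) - 1) with (- (b * z) / (y * L))
    by (rewrite Hx; field; repeat split; lra).
  apply Rabs_div_le; [apply Rmult_integral_contrapositive; split; lra|].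
  rewrite Rabs_Ropp, !Rabs_mult, (Rabs_right L) by lra.
  replace (B / L * (Rabs y * L)) with (B * Rabs y) by (field; lra).
  apply Rmult_le_compat; auto using Rabs_pos.
Qed.

(* Relative error of the recessive ratio y/z ~ b/L: writing r = a x/(y L),
   one has (y/z)/(b/L) = 1/(1 - r), and |r| <= A/L <= 1/2 gives error 2A/L. *)
Lemma recessive_ratio_error (a b L A x y z : R) :
  b <> 0 -> y <> 0 -> z <> 0 -> 0 < L -> Rabs a <= A -> 2 * A <= L ->
  Rabs x <= Rabs y -> a * x = L * y - b * z ->
  Rabs ((y / z) / (b / L) - 1) <= 2 * A / L.
Proof.
  intros Hb Hy Hz HL Ha HAL Hxy Hrec.
  set (r := a * x / (y * L)).
  assert (HyL : y * L <> 0) by (apply Rmult_integral_contrapositive; split; lra).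
  assert (Hr : Rabs r <= A / L).
  { apply Rabs_div_le; auto. rewrite !Rabs_mult, (Rabs_right L) by lra.
    replace (A / L * (Rabs y * L)) with (A * Rabs y) by (field; lra).
    apply Rmult_le_compat; auto using Rabs_pos. }
  assert (Hhalf : A / L <= 1 / 2)
    by (apply Rmult_le_reg_r with L; auto; unfold Rdiv; rewrite Rmult_assoc, Rinv_l; lra).
  assert (Hbz : b * z = y * L * (1 - r)) by (unfold r; field_simplify; lra).
  assert (H1r : 1 - r <> 0)
    by (intro H0; rewrite H0, Rmult_0_r in Hbz; apply Rmult_integral in Hbz; intuition).
  replace ((y / z) / (b / L) - 1) with (r / (1 - r)).
  2: { replace z with (y * L * (1 - r) / b) by (rewrite <- Hbz; field; auto).
       field; repeat split; lra. }
  apply Rabs_div_le; auto.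
  pose proof (Rabs_triang_inv 1 r) as T. rewrite Rabs_R1 in T.
  replace (2 * A / L) with (2 * (A / L)) by (field; lra).
  pose proof (Rabs_pos r). nra.
Qed.

Lemma Un_cv_shift1 (u : nat -> R) (l : R) : Un_cv (fun n => u (S n)) l -> Un_cv u l.
Proof.
  intros H t Ht. destruct (H t Ht) as [N HN].
  exists (S N). intros [|n] Hn; [lia|]. apply HN. lia.
Qed.

Lemma Un_cv_one_of_error_bound (u L : nat -> R) (C : R) (N0 : nat) :
  cv_infty L -> 0 <= C -> (forall n, (N0 <= n)%nat -> Rabs (u n - 1) <= C / L n) ->
  Un_cv u 1.
Proof.
  intros HL HC Hbound t Ht.
  destruct (HL (C / t + 1)) as [N HN].
  exists (max N N0). intros n Hn. unfold Rdist.
  assert (HLn := HN n ltac:(lia)).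
  assert (0 <= C / t) by (apply Rmult_le_pos; [lra | left; apply Rinv_0_lt_compat; lra]).
  eapply Rle_lt_trans; [apply Hbound; lia|].
  apply Rmult_lt_reg_r with (L n); [lra|].
  unfold Rdiv. rewrite Rmult_assoc, Rinv_l by lra.
  assert (t * (C / t) = C) by (field; lra). nra.
Qed.

Lemma not_l2_of_bounded_below (c : nat -> R) (y0 : R) (N : nat) :
  0 < y0 -> (forall n, (N <= n)%nat -> y0 <= Rabs (c n)) -> ~ in_l2 c.
Proof.
  intros Hy0 Hge [l Hl].
  destruct (Hl (y0 ^ 2 / 2)) as [M HM]; [nra|].
  assert (A1 := HM (N + M)%nat ltac:(lia)).
  assert (A2 := HM (S (N + M)) ltac:(lia)).
  unfold Rdist in A1, A2.
  replace (sum_f_R0 (fun j => c j ^ 2) (S (N + M)))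
    with (sum_f_R0 (fun j => c j ^ 2) (N + M) + c (S (N + M)) ^ 2) in A2 by reflexivity.
  apply Rabs_def2 in A1. apply Rabs_def2 in A2.
  assert (G := Hge (S (N + M)) ltac:(lia)).
  rewrite <- (pow2_abs (c (S (N + M)))) in A2. nra.
Qed.

(* A sequence whose modulus eventually at least halves at each step is in
   l^2: the partial sums S_n of the squares satisfy S_{n+1} + c_{n+1}^2/3 <=
   S_n + c_n^2/3 beyond N, so they are bounded. *)
Lemma l2_of_halving (c : nat -> R) (N : nat) :
  (forall n, (N <= n)%nat -> Rabs (c (S n)) <= Rabs (c n) / 2) -> in_l2 c.
Proof.
  intros Hhalf.
  set (Sq := fun n => sum_f_R0 (fun j => c j ^ 2) n).
  assert (Hg : Un_growing Sq).
  { intro n. unfold Sq. simpl. pose proof (pow2_ge_0 (c (S n))). lra. }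
  assert (Hmono : forall n m, (n <= m)%nat -> Sq n <= Sq m).
  { intros n m Hnm. induction Hnm as [|m Hnm IH]; [lra|]. pose proof (Hg m). lra. }
  assert (Htail : forall n, (N <= n)%nat -> Sq n + c n ^ 2 / 3 <= Sq N + c N ^ 2 / 3).
  { intros n Hn. induction Hn as [|n Hn IH]; [lra|].
    assert (Sq (S n) = Sq n + c (S n) ^ 2) by reflexivity.
    pose proof (Hhalf n Hn). pose proof (Rabs_pos (c (S n))).
    rewrite <- (pow2_abs (c (S n))), <- (pow2_abs (c n)) in *. nra. }
  destruct (growing_cv Sq Hg) as [l Hl].
  - exists (Sq N + c N ^ 2 / 3). intros x [n ->].
    pose proof (pow2_ge_0 (c N)). pose proof (pow2_ge_0 (c n)).
    destruct (Nat.le_gt_cases n N).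
    + pose proof (Hmono n N ltac:(lia)). lra.
    + pose proof (Htail n ltac:(lia)). lra.
  - exists l. exact Hl.
Qed.

Section ThreeTermRecurrence.
Variables (a b L c : nat -> R) (A B : R) (N : nat).
Hypothesis Ha_bound : forall n, Rabs (a n) <= A.
Hypothesis Hb_bound : forall n, Rabs (b n) <= B.
Hypothesis Ha_nz : forall n, a n <> 0.
Hypothesis Hb_nz : forall n, b n <> 0.
Hypothesis HL : cv_infty L.
Hypothesis Hlarge : forall n, (N <= n)%nat -> 2 * (A + B) < L n.
Hypothesis Hrec : forall n, a n * c (S (S n)) = L n * c (S n) - b n * c n.
Hypothesis Hnontrivial : forall n, c n <> 0 \/ c (S n) <> 0.

(* Bounds on moduli are nonnegative, so the threshold 2(A+B) makes L_n > 0. *)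
Lemma bounds_nonneg : 0 <= A /\ 0 <= B.
Proof.
  pose proof (Ha_bound 0). pose proof (Hb_bound 0).
  split; eapply Rle_trans; eauto using Rabs_pos.
Qed.

Lemma dominant_growth (n0 : nat) :
  (N <= n0)%nat -> Rabs (c n0) <= Rabs (c (S n0)) -> c (S n0) <> 0 ->
  forall m, (n0 <= m)%nat -> Rabs (c m) <= Rabs (c (S m)) /\ c (S m) <> 0.
Proof.
  intros HN0 Hle Hne m Hm. induction Hm as [|m Hm [IH1 IH2]]; auto.
  destruct bounds_nonneg as [HA HB].
  assert (Hlt : Rabs (c (S m)) < Rabs (c (S (S m)))).
  { apply (growth_step (a m) (b m) (L m) A B (c (S (S m))) (c (S m)) (c m)); auto.
    pose proof (Hlarge m ltac:(lia)). lra. }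
  split; [lra|]. intro Hz. rewrite Hz, Rabs_R0 in Hlt. pose proof (Rabs_pos (c (S m))). lra.
Qed.

Lemma dominant_case (n0 : nat) :
  (N <= n0)%nat -> Rabs (c n0) <= Rabs (c (S n0)) -> c (S n0) <> 0 ->
  ~ in_l2 c /\ Un_cv (fun n => c (S (S n)) / c (S n) / (L n / a n)) 1.
Proof.
  intros HN0 Hle Hne. pose proof (dominant_growth n0 HN0 Hle Hne) as Hgrow.
  destruct bounds_nonneg as [HA HB]. split.
  - apply (not_l2_of_bounded_below c (Rabs (c (S n0))) (S n0)); [apply Rabs_pos_lt; auto|].
    intros n Hn. induction Hn as [|n Hn IH]; [lra|].
    destruct (Hgrow n ltac:(lia)). lra.
  - apply (Un_cv_one_of_error_bound _ L B (max N n0)); auto.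
    intros n Hn. destruct (Hgrow n ltac:(lia)) as [G1 G2].
    pose proof (Hlarge n ltac:(lia)).
    apply (dominant_ratio_error (a n) (b n) (L n) B _ _ (c n)); auto; lra.
Qed.

Lemma recessive_case :
  (forall n, (N <= n)%nat -> Rabs (c (S n)) < Rabs (c n)) ->
  in_l2 c /\ Un_cv (fun n => c (S n) / c n / (b n / L n)) 1.
Proof.
  intros Hdec. destruct bounds_nonneg as [HA HB].
  assert (Hnz : forall n, (N <= n)%nat -> c n <> 0).
  { intros n Hn Hz. pose proof (Hdec n Hn) as Hd. rewrite Hz, Rabs_R0 in Hd.
    pose proof (Rabs_pos (c (S n))). lra. }
  split.
  - apply (l2_of_halving c N). intros n Hn.
    pose proof (Hlarge n Hn). pose proof (Hdec n Hn). pose proof (Hdec (S n) ltac:(lia)).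
    apply (halving_step (a n) (b n) (L n) A B (c (S (S n)))); auto; lra.
  - apply (Un_cv_one_of_error_bound _ L (2 * A) N); auto; [lra|].
    intros n Hn. pose proof (Hlarge n Hn). pose proof (Hdec (S n) ltac:(lia)).
    apply (recessive_ratio_error (a n) (b n) (L n) A (c (S (S n)))); auto; try lra.
Qed.

Theorem three_term_asymptotics :
  (in_l2 c -> Un_cv (fun n => c (S n) / c n / (b n / L n)) 1) /\
  (~ in_l2 c -> Un_cv (fun n => c (S (S n)) / c (S n) / (L n / a n)) 1).
Proof.
  destruct (classic (exists n0, (N <= n0)%nat /\
                       Rabs (c n0) <= Rabs (c (S n0)) /\ c (S n0) <> 0))
    as [[n0 [HN0 [Hle Hne]]] | Hnone].
  - destruct (dominant_case n0 HN0 Hle Hne) as [Hnl2 Hcv]. tauto.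
  - assert (Hdec : forall n, (N <= n)%nat -> Rabs (c (S n)) < Rabs (c n)).
    { intros n Hn. destruct (Rlt_le_dec (Rabs (c (S n))) (Rabs (c n))) as [|Hge]; auto.
      exfalso. destruct (Req_dec (c (S n)) 0) as [Hz|Hz].
      - rewrite Hz, Rabs_R0 in Hge. destruct (Hnontrivial n); [|contradiction].
        pose proof (Rabs_pos_lt (c n) H). lra.
      - apply Hnone. exists n. auto. }
    destruct (recessive_case Hdec) as [Hl2 Hcv]. tauto.
Qed.

End ThreeTermRecurrence.

Section Solutions.
Variables (delta eps gamma : R) (alpha beta lambda : nat -> R).
Hypothesis Heps : eps <> 0.
Hypothesis Halpha_nz : forall n, alpha n <> 0.
Hypothesis Hbeta_nz : forall n, beta n <> 0.
Notation solution := (is_solution delta eps gamma alpha beta lambda).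

Lemma mult_eps_eq0 (u x : R) : u <> 0 -> u * eps * x = 0 -> x = 0.
Proof.
  intros Hu H. destruct (Rmult_integral _ _ H) as [H1|H1]; auto.
  destruct (Rmult_integral _ _ H1); contradiction.
Qed.

Lemma solution_recurrence (c : nat -> R) : solution c -> forall n,
  alpha (S n) * eps * c (S (S n)) = (lambda (S n) - delta) * c (S n) - beta n * eps * c n.
Proof. intros [_ Hrow] n. specialize (Hrow n). lra. Qed.

Lemma solution_sub (c d : nat -> R) (t : R) :
  solution c -> solution d -> solution (fun n => c n - t * d n).
Proof.
  assert (Hcomb : forall u v : R, u = 0 -> v = 0 -> u - t * v = 0)
    by (intros u v -> ->; ring).
  intros [Hc0 Hc] [Hd0 Hd]. split.
  - rewrite <- (Hcomb _ _ Hc0 Hd0). ring.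
  - intro n. rewrite <- (Hcomb _ _ (Hc n) (Hd n)). ring.
Qed.

Lemma solution_zero_of_head (c : nat -> R) : solution c -> c 0%nat = 0 -> forall n, c n = 0.
Proof.
  intros [H0 Hrow] Hz.
  assert (Hpair : forall n, c n = 0 /\ c (S n) = 0).
  { induction n as [|n [IH1 IH2]].
    - split; auto. apply (mult_eps_eq0 (alpha 0%nat)); auto. rewrite Hz in H0. lra.
    - split; auto. apply (mult_eps_eq0 (alpha (S n))); auto.
      specialize (Hrow n). rewrite IH1, IH2 in Hrow. lra. }
  intro n; apply Hpair.
Qed.

Lemma solution_head_zero (c : nat -> R) :
  solution c -> forall k, c k = 0 -> c (S k) = 0 -> c 0%nat = 0.
Proof.
  intros [_ Hrow]. induction k as [|k IH]; intros Hk HSk; auto.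
  apply IH; auto. specialize (Hrow k). rewrite Hk, HSk in Hrow.
  apply (mult_eps_eq0 (beta k)); auto. lra.
Qed.

Lemma solution_nontrivial (c : nat -> R) :
  solution c -> (exists n, c n <> 0) -> forall n, c n <> 0 \/ c (S n) <> 0.
Proof.
  intros Hs [m Hm] n.
  destruct (Req_dec (c n) 0); destruct (Req_dec (c (S n)) 0); auto.
  exfalso. apply Hm, (solution_zero_of_head c Hs).
  apply (solution_head_zero c Hs n); auto.
Qed.

(* The solution with c_1 = 1, computed as the pairs (c_{n+1}, c_{n+2}). *)
Fixpoint fundamental_pair (n : nat) : R * R :=
  match n with
  | O => (1, - (delta - lambda 0%nat - gamma * eps) / (alpha 0%nat * eps))
  | S m => let p := fundamental_pair m in
      (snd p, - (beta m * eps * fst p + (delta - lambda (S m)) * snd p) / (alpha (S m) * eps))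
  end.

Definition fundamental_solution (n : nat) : R := fst (fundamental_pair n).

Lemma fundamental_solution_is_solution : solution fundamental_solution.
Proof. split; [|intro n]; unfold fundamental_solution; simpl; field; auto. Qed.

Lemma solution_multiple (c : nat -> R) :
  solution c -> forall n, c n = c 0%nat * fundamental_solution n.
Proof.
  intros Hc n.
  assert (Hz := solution_zero_of_head _ (solution_sub c _ (c 0%nat) Hc
                  fundamental_solution_is_solution)).
  simpl in Hz. specialize (Hz ltac:(unfold fundamental_solution; simpl; ring) n). lra.
Qed.

Lemma solution_ratio_asymptotics (A B : R) :
  (forall n, Rabs (alpha n) <= A) -> (forall n, Rabs (beta n) <= B) ->
  cv_infty lambda -> forall c, solution c -> (exists n, c n <> 0) ->
  (in_l2 c -> asymp_equiv (fun n => c (S n) / c n)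
                          (fun n => beta n * eps / (lambda (S n) - delta))) /\
  (~ in_l2 c -> asymp_equiv (fun n => c (S n) / c n)
                            (fun n => (lambda n - delta) / (alpha n * eps))).
Proof.
  intros HA HB Hlambda c Hc Hnt.
  set (L := fun n => lambda (S n) - delta).
  assert (HL : cv_infty L).
  { intro M. destruct (Hlambda (M + delta)) as [N HN].
    exists N. intros n Hn. unfold L. specialize (HN (S n) ltac:(lia)). lra. }
  destruct (HL (2 * (A * Rabs eps + B * Rabs eps))) as [N HN].
  assert (Hbound : forall (u : nat -> R) (M : R), (forall n, Rabs (u n) <= M) ->
            forall n, Rabs (u n * eps) <= M * Rabs eps).
  { intros u M Hu n. rewrite Rabs_mult. apply Rmult_le_compat_r; auto using Rabs_pos. }
  destruct (three_term_asymptotics (fun n => alpha (S n) * eps) (fun n => beta n * eps)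
              L c (A * Rabs eps) (B * Rabs eps) N
              (Hbound (fun n => alpha (S n)) A (fun n => HA (S n)))
              (Hbound beta B HB)
              (fun n => Rmult_integral_contrapositive _ _ (conj (Halpha_nz (S n)) Heps))
              (fun n => Rmult_integral_contrapositive _ _ (conj (Hbeta_nz n) Heps))
              HL (fun n Hn => HN n ltac:(lia))
              (solution_recurrence c Hc) (solution_nontrivial c Hc Hnt))
    as [Hrecessive Hdominant].
  split; [exact Hrecessive|]. intro Hnl2. apply Un_cv_shift1, Hdominant, Hnl2.
Qed.

End Solutions.

Theorem corollary3p3
  (delta eps gamma : R) (alpha beta lambda : nat -> R)
  (Heps : eps <> 0)
  (Halpha_b : bounded_seq alpha) (Hbeta_b : bounded_seq beta)
  (Halpha_nz : forall n : nat, alpha n <> 0)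
  (Hbeta_nz : forall n : nat, beta n <> 0)
  (Hlambda : cv_infty lambda) :
  ((exists v : nat -> R,
      is_solution delta eps gamma alpha beta lambda v /\
      (exists n : nat, v n <> 0) /\
      (forall c : nat -> R, is_solution delta eps gamma alpha beta lambda c ->
         exists t : R, forall n : nat, c n = t * v n)) /\
   (forall c d : nat -> R,
      is_solution delta eps gamma alpha beta lambda c ->
      is_solution delta eps gamma alpha beta lambda d ->
      c 0%nat = d 0%nat -> forall n : nat, c n = d n)) /\
  (forall c : nat -> R,
     is_solution delta eps gamma alpha beta lambda c ->
     (exists n : nat, c n <> 0) ->
     (in_l2 c ->
        asymp_equiv (fun n => c (S n) / c n)
                    (fun n => beta n * eps / (lambda (S n) - delta))) /\
     (~ in_l2 c ->
        asymp_equiv (fun n => c (S n) / c n)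
                    (fun n => (lambda n - delta) / (alpha n * eps)))).
Proof.
  split; [split|].
  - exists (fundamental_solution delta eps gamma alpha beta lambda).
    split; [now apply fundamental_solution_is_solution|]. split.
    + exists 0%nat. unfold fundamental_solution. simpl. lra.
    + intros c Hc. exists (c 0%nat). now apply solution_multiple.
  - intros c d Hc Hd H0 n.
    rewrite (solution_multiple _ _ _ _ _ _ Heps Halpha_nz c Hc),
            (solution_multiple _ _ _ _ _ _ Heps Halpha_nz d Hd), H0. reflexivity.
  - intros c Hc Hnt. destruct Halpha_b as [A HA], Hbeta_b as [B HB].
    exact (solution_ratio_asymptotics delta eps gamma alpha beta lambda
             Heps Halpha_nz Hbeta_nz A B HA HB Hlambda c Hc Hnt).
Qed.
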